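(* Let $H_\alpha=-\Delta_\alpha+V$ be the Schrödinger operator with a periodic magnetic potential $\alpha$ and a periodic electric potential $V$ on a periodic graph $\mathcal G$. Then all spectral bands of $H_\alpha$ are degenerate (i.e. each is a single point) if and only if $\mathcal T_{\alpha,n,\mathrm m}=0$ for all $(n,\mathrm m)\in\{1,\dots,\nu\}\times(\mathbb Z^d\setminus\{0\})$, where $\mathcal T_{\alpha,n,\mathrm m}=\sum_{\mathbf c\in\widetilde{\mathcal C}_n^{\mathrm m}}\omega(\mathbf c)e^{-i\alpha(\mathbf c)}$.
   Context: Let $\Gamma\subset\mathbb R^d$ be a lattice with basis $\mathfrak a_1,\dots,\mathfrak a_d$ and fundamental cell $\Omega=\{\sum_sx_s\mathfrak a_s:(x_s)\in[0,1)^d\}$. Let $\mathcal G=(\mathcal V,\mathcal E)$ be a connected, locally finite, infinite graph embedded in $\mathbb R^d$ (loops, multiple edges allowed), invariant under $\Gamma$-translations, with finite quotient $\mathcal G_*=(\mathcal V_*,\mathcal E_* )$; $\nu=\#\mathcal V_*$. Oriented edges $\mathcal A,\mathcal A_*$; $\underline{\mathbf e}$ inverse; $\varkappa_x$ = number of oriented edges starting at $x$. Edge index: $x=x_0+[x]$, $x_0\in\mathcal V\cap\Omega$, $[x]\in\Gamma$ with coordinates $[x]_{\mathbb A}\in\mathbb Z^d$; $\tau((x,y))=[y]_{\mathbb A}-[x]_{\mathbb A}$, defined on $\mathcal A_*$. Periodic magnetic potential $\alpha:\mathcal A\to\mathbb R$ ($\alpha(\underline{\mathbf e})=-\alpha(\mathbf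 e)$, $\Gamma$-invariant); $V$ real $\Gamma$-periodic. $H_\alpha=-\Delta_\alpha+V$, $\Delta_\alpha=\varkappa-A_\alpha$, $(A_\alpha f)_x=\sum_{\mathbf e=(x,y)\in\mathcal A}e^{i\alpha(\mathbf e)}f_y$. Fiber operators $H_\alpha(k)=A_\alpha(k)-\varkappa+V$ on $\mathbb C^\nu$, $(A_\alpha(k)f)_x=\sum_{\mathbf e=(x,y)\in\mathcal A_*}e^{i(\alpha(\mathbf e)+\langle\tau(\mathbf e),k\rangle)}f_y$, $k\in\mathbb T^d=\mathbb R^d/(2\pi\mathbb Z)^d$, eigenvalues $\lambda_{\alpha,1}(k)\le\dots\le\lambda_{\alpha,\nu}(k)$; spectral bands $\sigma_j(H_\alpha)=\lambda_{\alpha,j}(\mathbb T^d)$. Cycles: ordered sequences of oriented edges $(\mathbf e_1,\dots,\mathbf e_n)$, $\mathbf e_s=(x_{s-1},x_s)$, $x_n=x_0$ (cyclic shifts distinct, backtracking allowed); index $\tau(\mathbf c)=\sum\tau(\mathbf e)$, flux $\alpha(\mathbf c)=(\sum\alpha(\mathbf e))\bmod2\pi$. Modified graph $\widetilde{\mathcal G}_*$: add at each $x\in\mathcal V_*$ one oriented loop $\mathbf e_x$ (single oriented edge) with $\tau(\mathbf e_x)=0$, $\alpha(\mathbf e_x)=0$; $\omega(\mathbf e)=1$ for $\mathbf e\in\mathcal A_*$, $\omega(\mathbf e_x)=V_x-\varkappa_x$, $\omega(\mathbf c)=\prod_s\omega(\mathbf e_s)$; $\widetilde{\mathcal C}_n^{\mathrm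 m}$ is the set of cycles of $\widetilde{\mathcal G}_*$ of length $n$ and index $\mathrm m$. *)

From HB Require Import structures.
From mathcomp Require Import all_boot all_order all_algebra.
From mathcomp Require Import complex.
From mathcomp Require Import classical_sets reals trigo.
From Stdlib Require Import Relations.

Set Implicit Arguments.
Unset Strict Implicit.
Unset Printing Implicit Defensive.

Import Order.TTheory GRing.Theory Num.Theory.
Local Open Scope ring_scope.
Local Open Scope complex_scope.

Definition expi (R : realType) (x : R) : R[i] := (cos x) +i* (sin x).

Section PeriodicGraph.
Variables (R : realType) (nu d : nat) (E : finType).
(* Quotient graph data: oriented edges E of G_*, with source, target,
   inverse edge, edge index tau, magnetic potential alpha; electric
   potential V on the vertices 'I_nu. *)
Variables (src tgt : E -> 'I_nu) (inv : E -> E) (tau : E -> 'rV[int]_d)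
  (alpha : E -> R) (V : 'I_nu -> R).

Definition quotient_data_ok : Prop :=
  [/\ forall e, inv (inv e) = e,
      forall e, inv e != e,
      forall e, src (inv e) = tgt e /\ tgt (inv e) = src e,
      forall e, tau (inv e) = - tau e &
      forall e, alpha (inv e) = - alpha e].

(* The periodic graph G itself: vertices x_0 + [x], coded as pairs
   (x_0, [x]_A) in 'I_nu * Z^d; each quotient oriented edge e and each
   a in Z^d gives the edge (src e, a) -> (tgt e, a + tau e). *)
Definition pvertex := ('I_nu * 'rV[int]_d)%type.
Definition padj (u v : pvertex) : Prop :=
  exists e, src e = u.1 /\ tgt e = v.1 /\ v.2 = u.2 + tau e.
Definition pconnected : Prop :=
  forall u v : pvertex, clos_refl_trans pvertex padj u v.

Definition kappa (x : 'I_nu) : nat := #|[set e | src e == x]|.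

Definition pairing (m : 'rV[int]_d) (k : 'I_d -> R) : R :=
  \sum_(s < d) (m 0 s)%:~R * k s.

(* fiber operator H_alpha(k) = A_alpha(k) - kappa + V *)
Definition Hk (k : 'I_d -> R) : 'M[R[i]]_nu :=
  \matrix_(x, y) ((\sum_(e | (src e == x) && (tgt e == y))
                     expi (alpha e + pairing (tau e) k))
                  + (if x == y then (V x - (kappa x)%:R)%:C else 0)).

Definition sorted_spectrum (n : nat) (A : 'M[R[i]]_n) (s : seq R) : Prop :=
  sorted <=%R s /\ char_poly A = \prod_(r <- s) ('X - (r%:C)%:P).

(* lambda_{alpha,j}(k), j = 0..nu-1 (0-based) *)
Definition lam (k : 'I_d -> R) (j : nat) : R :=
  nth 0 (xget [::] [set s | sorted_spectrum (Hk k) s]) j.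

Definition band_degenerate (j : nat) : Prop :=
  exists c : R, forall k : 'I_d -> R, lam k j = c.

(* Modified quotient graph: original oriented edges plus one loop per vertex *)
Definition medge := (E + 'I_nu)%type.
Definition msrc (e : medge) : 'I_nu := match e with inl e => src e | inr x => x end.
Definition mtgt (e : medge) : 'I_nu := match e with inl e => tgt e | inr x => x end.
Definition mtau (e : medge) : 'rV[int]_d := match e with inl e => tau e | inr _ => 0 end.
Definition malpha (e : medge) : R := match e with inl e => alpha e | inr _ => 0 end.
Definition momega (e : medge) : R :=
  match e with inl _ => 1 | inr x => V x - (kappa x)%:R end.

Definition is_mcycle (n : nat) (c : {ffun 'I_n.+1 -> medge}) : bool :=
  [forall s : 'I_n.+1, mtgt (c s) == msrc (c (ordS s))].
Definition cyc_tau n (c : {ffun 'I_n.+1 -> medge}) : 'rV[int]_d :=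
  \sum_(s < n.+1) mtau (c s).
Definition cyc_alpha n (c : {ffun 'I_n.+1 -> medge}) : R :=
  \sum_(s < n.+1) malpha (c s).
Definition cyc_omega n (c : {ffun 'I_n.+1 -> medge}) : R :=
  \prod_(s < n.+1) momega (c s).

(* T_{alpha, n+1, m} = sum over cycles of length n+1 and index m of
   omega(c) e^{-i alpha(c)} *)
Definition Tcoef (n : nat) (m : 'rV[int]_d) : R[i] :=
  \sum_(c : {ffun 'I_n.+1 -> medge} | is_mcycle c && (cyc_tau c == m))
     (cyc_omega c)%:C * expi (- cyc_alpha c).

End PeriodicGraph.

From HB Require Import structures.
From mathcomp Require Import all_boot all_order all_algebra.
From mathcomp Require Import complex.
From mathcomp Require Import classical_sets reals trigo.
From mathcomp Require Import ring zify.

(* The fiber matrices H(k) are Hermitian, so the band functions at k are read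
   off the characteristic polynomial of H(k), which by the spectral theorem and
   Newton's identities is determined by the traces tr H(k)^n, n = 1..nu.
   Expanding the matrix power along closed walks of the modified quotient graph
   (whose loops carry the diagonal V - kappa) shows that the conjugate of
   tr H(k)^n is the trigonometric polynomial sum_m T_(n,m) e^(-i<m,k>).  By the
   linear independence of the characters k |-> e^(-i<m,k>), it is constant in
   k exactly when T_(n,m) = 0 for all m <> 0. *)

Import Order.TTheory GRing.Theory Num.Theory.
Set Implicit Arguments.
Unset Strict Implicit.
Unset Printing Implicit Defensive.
Local Open Scope ring_scope.

Section PowerSums.
Variable F : numFieldType.
Implicit Types (s t : seq F) (x : F).

Definition power_sum s r : F := \sum_(x <- s) x ^+ r.

Definition poly_of_roots s : {poly F} := \prod_(x <- s) ('X - x%:P).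

Lemma power_sum_cons x s r : power_sum (x :: s) r = x ^+ r + power_sum s r.
Proof. by rewrite /power_sum big_cons. Qed.

Lemma power_sum_nil r : power_sum [::] r = 0.
Proof. by rewrite /power_sum big_nil. Qed.

Lemma power_sum0 s : power_sum s 0 = (size s)%:R.
Proof.
by elim: s => [|x s IH]; rewrite ?power_sum_nil // power_sum_cons IH expr0 -natr1 addrC.
Qed.

Lemma coef_XsubC_mul x (q : {poly F}) k :
  (('X - x%:P) * q)`_k = (if k is k'.+1 then q`_k' else 0) - x * q`_k.
Proof. by rewrite mulrBl coefB coefXM coefCM; case: k. Qed.

Lemma coef_poly_of_roots_high s j : (size s <= j)%N -> (poly_of_roots s)`_j = (j == size s)%:R.
Proof.
move=> sj; have [->|jn] := eqVneq j (size s).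
  by have /monicP := monic_prod_XsubC s xpredT id; rewrite lead_coefE size_prod_XsubC.
by apply: nth_default; rewrite size_prod_XsubC; move: sj jn; lia.
Qed.

Lemma newton_identity0 s N : (size s < N)%N ->
  \sum_(i < N) (poly_of_roots s)`_i * power_sum s i = 0.
Proof.
move=> sN; rewrite /power_sum; under eq_bigr => i _ do rewrite big_distrr /=.
rewrite exchange_big /= big_seq big1 // => x xs.
rewrite -(@horner_coef_wide _ N) ?size_prod_XsubC //.
by apply/eqP; rewrite -/(root _ x) root_prod_XsubC.
Qed.

Lemma newton_identity s N j : (size s < N)%N ->
  j%:R * (poly_of_roots s)`_j = \sum_(i < N) (poly_of_roots s)`_(i + j) * power_sum s i.
Proof.
case: j => [|j] sN.
  by under eq_bigr => i _ do rewrite addn0; rewrite mul0r newton_identity0.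
elim: s sN j => [|x s IH] /= sN j.
  by rewrite /poly_of_roots big_nil coef1 mulr0 big1 // => i _; rewrite power_sum_nil mulr0.
set Q := poly_of_roots s.
have -> : poly_of_roots (x :: s) = ('X - x%:P) * Q by rewrite /poly_of_roots big_cons.
have IHs j' : j'%:R * Q`_j' = \sum_(i < N) Q`_(i + j') * power_sum s i.
  case: j' => [|j']; last exact: (IH (ltnW sN) j').
  by under eq_bigr => i _ do rewrite addn0; rewrite mul0r newton_identity0 // ltnW.
have telescope : \sum_(i < N) (Q`_(i + j) * x ^+ i - x * (Q`_(i + j).+1 * x ^+ i)) = Q`_j.
  rewrite -(big_mkord xpredT (fun i => Q`_(i + j) * x ^+ i - x * (Q`_(i + j).+1 * x ^+ i))).
  rewrite (telescope_sumr_eq (fun i => - (Q`_(i + j) * x ^+ i))) //; last first.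
    by move=> i _; rewrite addSn exprS /=; ring.
  have -> : Q`_(N + j) = 0.
    by apply: nth_default; rewrite size_prod_XsubC; move: sN; lia.
  by rewrite mul0r oppr0 sub0r expr0 mulr1 opprK.
rewrite coef_XsubC_mul.
under eq_bigr => i _ do rewrite coef_XsubC_mul addnS power_sum_cons.
rewrite (eq_bigr (fun i : 'I_N => (Q`_(i + j) * x ^+ i - x * (Q`_(i + j).+1 * x ^+ i))
   + (Q`_(i + j) * power_sum s i - x * (Q`_(i + j).+1 * power_sum s i)))); last first.
  by move=> i _; ring.
have IHsS : j.+1%:R * Q`_j.+1 = \sum_(i < N) Q`_(i + j).+1 * power_sum s i.
  by rewrite IHs; apply: eq_bigr => i _; rewrite addnS.
by rewrite big_split /= telescope sumrB -mulr_sumr -IHs -IHsS -natr1; ring.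
Qed.

Lemma newton_identity_size s j :
  (j%:R - (size s)%:R) * (poly_of_roots s)`_j =
  \sum_(i < size s) (poly_of_roots s)`_(i.+1 + j) * power_sum s i.+1.
Proof.
rewrite mulrBl (newton_identity j (ltnSn (size s))) big_ord_recl power_sum0.
by rewrite add0n [_ * (size s)%:R]mulrC addrAC subrr add0r.
Qed.

Lemma eq_poly_of_roots s t : size s = size t ->
    (forall r, (0 < r <= size s)%N -> power_sum s r = power_sum t r) ->
  poly_of_roots s = poly_of_roots t.
Proof.
move=> st hp; apply/polyP => j; move: {2}(size s - j)%N (leqnn (size s - j)) => k.
elim: k j => [|k IH] j jk.
  by rewrite !coef_poly_of_roots_high -?st //; move: jk; lia.
have [sj|js] := leqP (size s) j; first by rewrite !coef_poly_of_roots_high -?st.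
have jn : (j%:R - (size s)%:R : F) != 0 by rewrite subr_eq0 eqr_nat neq_ltn js.
apply: (mulfI jn); rewrite newton_identity_size [in RHS]st newton_identity_size -st.
by apply: eq_bigr => i _; rewrite IH ?hp //; move: (ltn_ord i) jk; lia.
Qed.

End PowerSums.

Local Open Scope complex_scope.

Section Similarity.
Variables (R : comUnitRingType) (n : nat).
Implicit Types (P A : 'M[R]_n).

Lemma char_poly_similar P A : P \in unitmx ->
  char_poly (invmx P *m A *m P) = char_poly A.
Proof.
move=> Pu; set Q := map_mx polyC P; set Qi := map_mx polyC (invmx P).
have QiQ : Qi *m Q = 1%:M by rewrite -map_mxM mulVmx // map_mx1.
have conjE : char_poly_mx (invmx P *m A *m P) = Qi *m char_poly_mx A *m Q.
  rewrite /char_poly_mx !map_mxM -/Q -/Qi mulmxBr mulmxBl.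
  by rewrite scalar_mxC -(mulmxA _ Qi) QiQ mulmx1.
by rewrite /char_poly conjE !det_mulmx mulrAC -det_mulmx QiQ det1 mul1r.
Qed.

Lemma exp_similar P A r : P \in unitmx ->
  (invmx P *m A *m P) ^+ r = invmx P *m A ^+ r *m P.
Proof.
move=> Pu; elim: r => [|r IH]; first by rewrite !expr0 -idmxE mulmx1 mulVmx.
rewrite !exprS IH -!mulmxE !mulmxA -[invmx P *m A *m P *m invmx P]mulmxA mulmxV //.
by rewrite mulmx1.
Qed.

Lemma mxtrace_similar P A : P \in unitmx -> \tr (invmx P *m A *m P) = \tr A.
Proof. by move=> Pu; rewrite -mulmxA mxtrace_mulC -mulmxA mulmxV // mulmx1. Qed.

End Similarity.

Lemma diag_mx_exp (R : pzRingType) n (D : 'rV[R]_n) r :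
  diag_mx D ^+ r = diag_mx (map_mx (fun x => x ^+ r) D).
Proof.
elim: r => [|r IH].
  by apply/matrixP => i j; rewrite expr0 !mxE; case: eqP => [->|]; rewrite ?expr0.
rewrite exprS IH -mulmxE mul_diag_mx; apply/matrixP => i j; rewrite !mxE.
by case: eqP => [->|_]; rewrite ?mulr0n ?mulr0 ?mulr1n ?exprS.
Qed.

Section NormalSpectrum.
Variables (C : numClosedFieldType) (n : nat).
Implicit Types A B : 'M[C]_n.

Definition spectral_seq A : seq C := [seq spectral_diag A 0 i | i <- enum 'I_n].

Lemma size_spectral_seq A : size (spectral_seq A) = n.
Proof. by rewrite size_map size_enum_ord. Qed.

Lemma char_poly_normalmx A : A \is normalmx ->
  char_poly A = poly_of_roots (spectral_seq A).
Proof.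
move=> /orthomx_spectralP {1}->; rewrite char_poly_similar ?spectral_unit //.
rewrite char_poly_trig ?diag_mx_is_trig // /poly_of_roots big_map big_enum /=.
by apply: eq_bigr => i _; rewrite mxE eqxx mulr1n.
Qed.

Lemma mxtrace_exp_normalmx A r : A \is normalmx ->
  \tr (A ^+ r) = power_sum (spectral_seq A) r.
Proof.
move=> /orthomx_spectralP {1}->; rewrite exp_similar ?spectral_unit //.
rewrite mxtrace_similar ?spectral_unit // diag_mx_exp mxtrace_diag.
by rewrite /power_sum big_map big_enum; apply: eq_bigr => i _; rewrite mxE.
Qed.

Lemma normalmx_char_poly_eqP A B : A \is normalmx -> B \is normalmx ->
  char_poly A = char_poly B <->
  (forall r, (0 < r <= n)%N -> \tr (A ^+ r) = \tr (B ^+ r)).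
Proof.
move=> nA nB; rewrite !char_poly_normalmx //.
split=> [/prod_XsubC_eq AB r _ | trAB].
  by rewrite !mxtrace_exp_normalmx // /power_sum (perm_big _ AB).
apply: eq_poly_of_roots; rewrite ?size_spectral_seq // => r rn.
by rewrite -!mxtrace_exp_normalmx ?trAB.
Qed.

End NormalSpectrum.

Section SortedSpectrum.
Variables (R : realType) (n : nat).
Implicit Types A B : 'M[R[i]]_n.

Lemma size_sorted_spectrum A s : sorted_spectrum A s -> size s = n.
Proof.
by case=> _ cpA; have := size_char_poly A; rewrite cpA size_prod_XsubC => -[].
Qed.

Lemma hermitian_sorted_spectrum A : A \is hermsymmx -> exists s, sorted_spectrum A s.
Proof.
move=> hA; exists (sort <=%R [seq complex.Re x | x <- spectral_seq A]).
split; first exact/sort_sorted/le_total.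
rewrite char_poly_normalmx ?hermitian_normalmx // /poly_of_roots.
rewrite (perm_big _ (permEl (perm_sort <=%R _))) !big_map.
apply: eq_bigr => i _; congr ('X - _%:P).
apply/esym/RRe_real; have /mxOverP := hermitian_spectral_diag_real hA; exact.
Qed.

Definition sorted_eigenvalues A : seq R := xget [::] [set s | sorted_spectrum A s].

Lemma sorted_eigenvaluesP A : A \is hermsymmx -> sorted_spectrum A (sorted_eigenvalues A).
Proof. by move=> /hermitian_sorted_spectrum[s sA]; apply: xgetI sA. Qed.

Lemma sorted_eigenvalues_char_poly A B :
  char_poly A = char_poly B -> sorted_eigenvalues A = sorted_eigenvalues B.
Proof. by move=> AB; rewrite /sorted_eigenvalues /sorted_spectrum AB. Qed.

Lemma hermitian_char_poly_eq_nth A B : A \is hermsymmx -> B \is hermsymmx ->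
    (forall j, (j < n)%N -> nth 0 (sorted_eigenvalues A) j = nth 0 (sorted_eigenvalues B) j) ->
  char_poly A = char_poly B.
Proof.
move=> hA hB eqAB.
have [_ ->] := sorted_eigenvaluesP hA; have [_ ->] := sorted_eigenvaluesP hB.
have sizeA := size_sorted_spectrum (sorted_eigenvaluesP hA).
have sizeB := size_sorted_spectrum (sorted_eigenvaluesP hB).
have eqs : sorted_eigenvalues A = sorted_eigenvalues B.
  apply: (@eq_from_nth R 0) => [|j]; first exact: etrans sizeA (esym sizeB).
  by rewrite sizeA; apply: eqAB.
by rewrite eqs.
Qed.

End SortedSpectrum.

Section Characters.
Variable R : realType.
Implicit Types a b : R.

Lemma expi0 : expi (0 : R) = 1.
Proof. by rewrite /expi cos0 sin0. Qed.

Lemma expiD a b : expi (a + b) = expi a * expi b.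
Proof.
rewrite /expi cosD sinD; apply/eqP; rewrite eq_complex /=.
by apply/andP; split; apply/eqP; ring.
Qed.

Lemma expiN a : expi (- a) = (expi a)^*.
Proof. by rewrite /expi cosN sinN. Qed.

Lemma conj_real_expi a b : (a%:C * expi b)^* = a%:C * expi (- b).
Proof.
rewrite /expi cosN sinN; apply/eqP; rewrite eq_complex /=.
by apply/andP; split; apply/eqP; ring.
Qed.

Lemma expiDpi a : expi (a + pi) = - expi a.
Proof. by rewrite /expi cosDpi sinDpi. Qed.

Lemma expi_neq0 a : expi a != 0.
Proof.
apply/negP => /eqP ea0; have := expiD a (- a).
by rewrite subrr expi0 ea0 mul0r; apply/eqP; rewrite oner_eq0.
Qed.

Variable d : nat.
Implicit Types (m : 'rV[int]_d) (k h : 'I_d -> R).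

Lemma pairing0 k : pairing 0 k = 0.
Proof. by rewrite /pairing big1 // => s _; rewrite mxE mul0r. Qed.

Lemma pairingDl m1 m2 k : pairing (m1 + m2) k = pairing m1 k + pairing m2 k.
Proof. by rewrite /pairing -big_split; apply: eq_bigr => s _; rewrite mxE intrD mulrDl. Qed.

Lemma pairingDr m k h : pairing m (k \+ h) = pairing m k + pairing m h.
Proof. by rewrite /pairing -big_split; apply: eq_bigr => s _; rewrite mulrDr. Qed.

Lemma pairingN m k : pairing (- m) k = - pairing m k.
Proof. by rewrite /pairing -sumrN; apply: eq_bigr => s _; rewrite mxE intrN mulNr. Qed.

Lemma pairing_sum (I : finType) (P : pred I) (f : I -> 'rV[int]_d) k :
  pairing (\sum_(i | P i) f i) k = \sum_(i | P i) pairing (f i) k.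
Proof. exact: (big_morph (fun m => pairing m k) (fun m1 m2 => pairingDl m1 m2 k) (pairing0 k)). Qed.

Definition chi m k : R[i] := expi (- pairing m k).

Lemma chi0 k : chi 0 k = 1.
Proof. by rewrite /chi pairing0 oppr0 expi0. Qed.

Lemma chi_at0 m : chi m (fun=> 0) = 1.
Proof.
by rewrite /chi /pairing big1 ?oppr0 ?expi0 // => s _; rewrite mulr0.
Qed.

Lemma chiD m k h : chi m (k \+ h) = chi m k * chi m h.
Proof. by rewrite /chi pairingDr opprD expiD. Qed.

Lemma chi_neq0 m k : chi m k != 0.
Proof. exact: expi_neq0. Qed.

Lemma chi_sep m m' : m != m' -> exists h, chi m h != chi m' h.
Proof.
move=> mm'; have [s ms] : exists s, m 0 s != m' 0 s.
  apply/existsP; apply: contraR mm' => /existsPn eqm.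
  by apply/eqP/rowP => s; apply/eqP/negPn/eqm.
set z : R := (m 0 s - m' 0 s)%:~R.
have z0 : z != 0 by rewrite intr_eq0 subr_eq0.
pose h s' : R := if s' == s then pi / z else 0.
have pairing_h m1 : pairing m1 h = (m1 0 s)%:~R * (pi / z).
  rewrite /pairing (bigD1 s) //= big1 ?addr0 /h ?eqxx // => s' /negbTE ->.
  by rewrite mulr0.
(* h makes the two phases differ by exactly pi. *)
exists h; have -> : chi m' h = - chi m h.
  rewrite /chi -expiDpi !pairing_h; congr expi.
  have -> : (m 0 s)%:~R = z + (m' 0 s)%:~R :> R by rewrite /z intrB subrK.
  by field; rewrite -intrB.
by rewrite (eq_sym (chi m h)) eqNr chi_neq0.
Qed.

Lemma chi_independent (ms : seq 'rV[int]_d) (a : 'rV[int]_d -> R[i]) :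
  uniq ms -> (forall k, \sum_(m <- ms) a m * chi m k = 0) ->
  {in ms, forall m, a m = 0}.
Proof.
elim: ms a => [|m0 ms IH] a //= /andP[m0ms ums] sum0.
have a_ms : {in ms, forall m, a m = 0}.
  move=> m mms; have [h hh] : exists h, chi m h != chi m0 h.
    by apply: chi_sep; apply: contraNneq m0ms => <-.
  (* Shifting k by h and subtracting chi m0 h times the original relation
     kills the m0 term. *)
  have sum_shift k : \sum_(m1 <- ms) (a m1 * (chi m1 h - chi m0 h)) * chi m1 k = 0.
    transitivity (\sum_(m1 <- m0 :: ms) a m1 * chi m1 (k \+ h)
                  - chi m0 h * \sum_(m1 <- m0 :: ms) a m1 * chi m1 k); last first.
      by rewrite !sum0 mulr0 subr0.
    rewrite mulr_sumr -sumrB big_cons chiD.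
    have -> : a m0 * (chi m0 k * chi m0 h) - chi m0 h * (a m0 * chi m0 k) = 0 by ring.
    by rewrite add0r; apply: eq_bigr => m1 _; rewrite chiD; ring.
  have /eqP := IH _ ums sum_shift m mms.
  by rewrite mulf_eq0 subr_eq0 (negbTE hh) orbF => /eqP.
move=> m; rewrite inE => /predU1P[->|/a_ms //].
have := sum0 (fun=> 0); rewrite big_cons big_seq big1 => [|m1 /a_ms ->]; last exact: mul0r.
by rewrite addr0 chi_at0 mulr1.
Qed.

Lemma trig_poly_constP (ms : seq 'rV[int]_d) (a : 'rV[int]_d -> R[i]) :
    uniq ms -> 0 \in ms ->
  (forall k k', \sum_(m <- ms) a m * chi m k = \sum_(m <- ms) a m * chi m k') <->
  {in ms, forall m, m != 0 -> a m = 0}.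
Proof.
move=> ums ms0; split=> [const m mms m0 | a0 k k'].
  pose b m1 := a m1 - (m1 == 0)%:R * \sum_(m2 <- ms) a m2.
  have := chi_independent (a := b) ums _ mms; rewrite /b (negbTE m0) mul0r subr0.
  apply=> k; under eq_bigr => m1 _ do rewrite mulrBl.
  rewrite sumrB [X in _ - X](bigD1_seq 0) //= eqxx mul1r chi0 mulr1.
  rewrite [X in _ - (_ + X)]big1 => [|m1 /negbTE->]; last by rewrite !mul0r.
  rewrite addr0 (const k (fun=> 0)).
  by rewrite [X in X - _](eq_bigr a) ?subrr // => m1 _; rewrite chi_at0 mulr1.
have sumE k1 : \sum_(m <- ms) a m * chi m k1 = a 0.
  rewrite (bigD1_seq 0) //= chi0 mulr1 big1_seq ?addr0 // => m /andP[m0 mms].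
  by rewrite a0 ?mul0r.
by rewrite !sumE.
Qed.

End Characters.

Lemma mxtrace_delta_mx (R : pzSemiRingType) n (x y : 'I_n) :
  \tr (delta_mx x y : 'M[R]_n) = (x == y)%:R.
Proof.
rewrite /mxtrace (bigD1 x) //= big1 ?addr0; first by rewrite mxE eqxx.
by move=> z /negbTE zx; rewrite mxE zx.
Qed.

Section QuotientGraph.
Variables (R : realType) (nu d : nat) (E : finType).
Variables (src tgt : E -> 'I_nu) (inv : E -> E) (tau : E -> 'rV[int]_d)
  (alpha : E -> R) (V : 'I_nu -> R).

Local Notation H k := (Hk src tgt tau alpha V k).
Local Notation T n m := (Tcoef src tgt tau alpha V n m).
Local Notation mcycle n := {ffun 'I_n.+1 -> medge nu E}.

Definition medge_weight k (e : medge nu E) : R[i] :=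
  (momega src V e)%:C * expi (malpha alpha e + pairing (mtau tau e) k).

Definition medge_mx k (e : medge nu E) : 'M[R[i]]_nu :=
  medge_weight k e *: delta_mx (msrc src e) (mtgt tgt e).

(* The loop added at x carries the diagonal entry V x - kappa x of H k. *)
Lemma Hk_sum_medge_mx k : H k = \sum_(e : medge nu E) medge_mx k e.
Proof.
apply/matrixP => x y; rewrite summxE !mxE big_sumType /=; congr (_ + _).
  rewrite big_mkcond /=; apply: eq_bigr => e _; rewrite !mxE /medge_weight /=.
  rewrite [x == _]eq_sym [y == _]eq_sym rmorph1 mul1r.
  by case: andP => _; rewrite ?mulr1 ?mulr0.
rewrite (bigD1 x) //= big1 ?addr0 => [|z /negbTE zx]; last by rewrite !mxE eq_sym zx mulr0.
rewrite !mxE eqxx /medge_weight /= pairing0 addr0 expi0 mulr1 [y == x]eq_sym.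
by case: eqP => _; rewrite ?mulr1 ?mulr0.
Qed.

Lemma prod_medge_mx k (f : nat -> medge nu E) m :
  \prod_(s < m.+1) medge_mx k (f s) =
  if all (fun s => mtgt tgt (f s) == msrc src (f s.+1)) (iota 0 m)
  then (\prod_(s < m.+1) medge_weight k (f s)) *: delta_mx (msrc src (f 0)) (mtgt tgt (f m))
  else 0.
Proof.
elim: m => [|m IH]; first by rewrite !big_ord1.
have -> : iota 0 m.+1 = rcons (iota 0 m) m by rewrite -cats1 -addn1 iotaD.
rewrite all_rcons big_ord_recr /= IH [in RHS]big_ord_recr /= andbC.
case: all; last by rewrite mul0r.
rewrite -mulmxE -scalemxAl -scalemxAr scalerA mul_delta_mx_cond.
by case: eqP => _; rewrite ?mulr1n ?mulr0n ?scaler0.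
Qed.

Lemma is_mcycleE n (c : mcycle n) :
  is_mcycle src tgt c =
  all (fun s => mtgt tgt (c (inord s)) == msrc src (c (inord s.+1))) (iota 0 n)
  && (msrc src (c (inord 0)) == mtgt tgt (c (inord n))).
Proof.
have cE (j : 'I_n.+1) i : val j = i -> c j = c (inord i) by move=> <-; rewrite inord_val.
apply/forallP/andP => [cyc | [/allP path_c closed_c] s].
  split.
    apply/allP => s; rewrite mem_iota add0n => /andP[_ sn].
    have := cyc (inord s).
    by rewrite (cE (ordS (inord s)) s.+1) //= inordK ?modn_small // ltnW.
  have := cyc (inord n); rewrite (cE (ordS (inord n)) 0) /=; last by rewrite inordK // modnn.
  by rewrite eq_sym; apply.
have [sn|ns] := ltnP s n.
  have := path_c s; rewrite mem_iota add0n sn /= => /(_ isT).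
  by rewrite (cE s s) // (cE (ordS s) s.+1) //= modn_small.
have sn : val s = n by apply/eqP; rewrite eqn_leq ns andbT -ltnS ltn_ord.
rewrite (cE s n) // (cE (ordS s) 0) 1?eq_sym //=.
by rewrite sn modnn.
Qed.

Lemma prod_medge_weight k n (c : mcycle n) :
  \prod_(s < n.+1) medge_weight k (c s) =
  (cyc_omega src V c)%:C * expi (cyc_alpha alpha c + pairing (cyc_tau tau c) k).
Proof.
rewrite /medge_weight big_split /= -rmorph_prod.
rewrite -(big_morph _ (@expiD R) (@expi0 R)) big_split /=.
by rewrite /cyc_omega /cyc_alpha /cyc_tau pairing_sum.
Qed.

Lemma mxtrace_Hk_exp k n :
  \tr (H k ^+ n.+1) =
  \sum_(c : mcycle n | is_mcycle src tgt c)
     (cyc_omega src V c)%:C * expi (cyc_alpha alpha c + pairing (cyc_tau tau c) k).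
Proof.
have -> : H k ^+ n.+1 = \prod_(s < n.+1) H k by rewrite prodr_const card_ord.
rewrite Hk_sum_medge_mx bigA_distr_bigA /= raddf_sum [RHS]big_mkcond /=.
apply: eq_bigr => c _.
rewrite (eq_bigr (fun s : 'I_n.+1 => medge_mx k (c (inord s)))) => [|s _]; last first.
  by rewrite inord_val.
rewrite (prod_medge_mx k (fun s => c (inord s))) is_mcycleE.
case: all => /=; last by rewrite mxtrace0.
rewrite mxtraceZ mxtrace_delta_mx -prod_medge_weight.
rewrite (eq_bigr (fun s : 'I_n.+1 => medge_weight k (c s))) => [|s _]; last first.
  by rewrite inord_val.
by case: eqP => _; rewrite ?mulr1 ?mulr0.
Qed.

Definition cycle_indices n : seq 'rV[int]_d :=
  undup (0 :: [seq cyc_tau tau c | c : mcycle n]).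

Lemma cycle_indices_uniq n : uniq (cycle_indices n).
Proof. exact: undup_uniq. Qed.

Lemma cycle_indices0 n : 0 \in cycle_indices n.
Proof. by rewrite mem_undup mem_head. Qed.

Lemma cyc_tau_cycle_indices n (c : mcycle n) : cyc_tau tau c \in cycle_indices n.
Proof. by rewrite mem_undup in_cons map_f ?mem_enum ?orbT. Qed.

Lemma Tcoef_eq0 n m : m \notin cycle_indices n -> T n m = 0.
Proof.
move=> mc; rewrite /Tcoef big1 // => c /andP[_ /eqP cm].
by move: mc; rewrite -cm cyc_tau_cycle_indices.
Qed.

Lemma conj_mxtrace_Hk_exp k n :
  (\tr (H k ^+ n.+1))^* = \sum_(m <- cycle_indices n) T n m * chi m k.
Proof.
rewrite mxtrace_Hk_exp rmorph_sum.
transitivity (\sum_(c : mcycle n | is_mcycle src tgt c)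
    (cyc_omega src V c)%:C * expi (- cyc_alpha alpha c) * chi (cyc_tau tau c) k).
  apply: eq_bigr => c _; apply: etrans (conj_real_expi _ _) _.
  by rewrite opprD expiD mulrA.
under [RHS]eq_bigr => m _ do rewrite /Tcoef mulr_suml big_mkcondr /=.
rewrite exchange_big /=; apply: eq_bigr => c _.
rewrite (bigD1_seq (cyc_tau tau c)) ?cycle_indices_uniq ?cyc_tau_cycle_indices //=.
by rewrite eqxx big1 ?addr0 // => m; rewrite eq_sym => /negbTE->.
Qed.

Lemma mxtrace_Hk_exp_constP n :
  (forall k k', \tr (H k ^+ n.+1) = \tr (H k' ^+ n.+1)) <->
  (forall m, m != 0 -> T n m = 0).
Proof.
have trigP := trig_poly_constP (Tcoef src tgt tau alpha V n)
  (cycle_indices_uniq n) (cycle_indices0 n).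
(* Rewrite one side at a time: matching H k against H k' unfolds both
   matrices and is very slow. *)
split=> [tr_const m m0 | T0 k k'].
  have [mc|/Tcoef_eq0 //] := boolP (m \in cycle_indices n).
  apply: trigP.1 m mc m0 => k k'.
  by rewrite -[LHS]conj_mxtrace_Hk_exp -[RHS]conj_mxtrace_Hk_exp [in LHS](tr_const k k').
apply: (can_inj (@conjcK R)); rewrite [LHS]conj_mxtrace_Hk_exp [RHS]conj_mxtrace_Hk_exp.
by apply: trigP.2 => m _; apply: T0.
Qed.

Hypothesis hok : quotient_data_ok src tgt inv tau alpha.

Lemma Hk_hermitian k : H k \is hermsymmx.
Proof.
case: hok => invK _ inv_ends tauN alphaN.
apply/is_hermitianmxP; rewrite expr0 scale1r; apply/matrixP => x y; rewrite !mxE.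
rewrite [in RHS]rmorphD [in RHS]rmorph_sum; congr (_ + _).
  rewrite (reindex_inj (can_inj invK)) /=.
  apply: eq_big => [e|e _]; first by case: (inv_ends e) => -> ->; rewrite andbC.
  by rewrite alphaN tauN pairingN -opprD expiN.
rewrite eq_sym; case: eqP => [->|_]; last by rewrite rmorph0.
exact/esym/conjc_real.
Qed.

Lemma band_degenerate_char_polyP :
  (forall j : 'I_nu, band_degenerate src tgt tau alpha V j) <->
  (forall k k', char_poly (H k) = char_poly (H k')).
Proof.
have lamE k j : lam src tgt tau alpha V k j = nth 0 (sorted_eigenvalues (H k)) j by [].
split=> [deg k k' | cp j].
  apply: (hermitian_char_poly_eq_nth (Hk_hermitian k) (Hk_hermitian k')) => j jn.
  by have [c lamc] := deg (Ordinal jn); rewrite -[LHS]lamE -[RHS]lamE [LHS]lamc [RHS]lamc.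
exists (lam src tgt tau alpha V (fun=> 0) j) => k.
by rewrite !lamE (sorted_eigenvalues_char_poly (cp k (fun=> 0))).
Qed.

Lemma band_degenerate_traceP :
  (forall j : 'I_nu, band_degenerate src tgt tau alpha V j) <->
  (forall (n : 'I_nu) k k', \tr (H k ^+ n.+1) = \tr (H k' ^+ n.+1)).
Proof.
have normalH k : H k \is normalmx by apply/hermitian_normalmx/Hk_hermitian.
rewrite band_degenerate_char_polyP.
split=> [cp n k k' | tr k k'].
  exact: (normalmx_char_poly_eqP (normalH k) (normalH k')).1 (cp k k') n.+1 (ltn_ord n).
apply/(normalmx_char_poly_eqP (normalH k) (normalH k')) => r /andP[r0 rn].
by rewrite -(prednK r0) in rn *; apply: (tr (Ordinal rn)).
Qed.

End QuotientGraph.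

Local Close Scope complex_scope.

Theorem lemma4p3 (R : realType) (nu d : nat) (E : finType)
    (src tgt : E -> 'I_nu) (inv : E -> E) (tau : E -> 'rV[int]_d)
    (alpha : E -> R) (V : 'I_nu -> R)
    (hd : (0 < d)%N)
    (hok : quotient_data_ok src tgt inv tau alpha)
    (hconn : pconnected src tgt tau) :
  (forall j : 'I_nu, band_degenerate src tgt tau alpha V j) <->
  (forall (n : 'I_nu) (m : 'rV[int]_d), m != 0 ->
     Tcoef src tgt tau alpha V n m = 0).
Proof.
split=> [/(band_degenerate_traceP V hok) tr_const n | T0].
  exact/mxtrace_Hk_exp_constP/tr_const.
by apply/(band_degenerate_traceP V hok) => n; apply/mxtrace_Hk_exp_constP/T0.
Qed.
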